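(* Let $n\ge2$, $A\in\mathbb{R}^{n\times n}$ symmetric with eigenvalues $\lambda_1\ge\dots\ge\lambda_n$, $\rho=\lambda_1-\lambda_n$, $\gamma>0$, and suppose $\beta\ge\frac{8n}{n-1}(1+\gamma)\rho\,n^{3/2}$. Then $f(\mathbf{z})=\frac12\mathbf{z}^TA\mathbf{z}+\frac{\beta}{2}\sum_kz_k^4$ on $\mathbb{S}^{n-1}$ is $(C_\gamma\rho,\frac{\gamma}{\sqrt2}\rho,C_\gamma\rho)$-strict-saddle, where $C_\gamma=\frac{4}{n-1}(1+\gamma)n^{3/2}-1$.
   Context: $\mathbb{S}^{n-1}$ is the unit sphere in $\mathbb{R}^n$, $\mathcal{T}_{\mathbf{z}}=\{\mathbf{v}:\mathbf{v}^T\mathbf{z}=0\}$. For $\mathbf{z}\in\mathbb{S}^{n-1}$ let $2\lambda=\mathbf{z}^TA\mathbf{z}+2\beta\|\mathbf{z}\|_4^4$, $\mathrm{grad} f(\mathbf{z})=[A+2\beta\,\mathrm{diag}(z_1^2,\dots,z_n^2)]\mathbf{z}-2\lambda\mathbf{z}$, and $H_f(\mathbf{z})[\mathbf{v}]=\mathbf{v}^T[A+6\beta\,\mathrm{diag}(z_1^2,\dots,z_n^2)-2\lambda I]\mathbf{v}$. For $\xi,\epsilon,\zeta>0$, $f$ is $(\xi,\epsilon,\zeta)$-strict-saddle if for every $\mathbf{z}\in\mathbb{S}^{n-1}$ at least one holds: (1) $H_f(\mathbf{z})[\mathbf{v}]\ge\xi$ for all $\mathbf{v}\in\mathcal{T}_{\mathbf{z}}\cap\mathbb{S}^{n-1}$;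 (2) $\|\mathrm{grad} f(\mathbf{z})\|\ge\epsilon$; (3) there is $\mathbf{v}\in\mathcal{T}_{\mathbf{z}}\cap\mathbb{S}^{n-1}$ with $H_f(\mathbf{z})[\mathbf{v}]\le-\zeta$. *)

From HB Require Import structures.
From mathcomp Require Import all_boot all_order all_algebra.
From mathcomp Require Import reals.
Set Implicit Arguments. Unset Strict Implicit. Unset Printing Implicit Defensive.
Import Order.TTheory GRing.Theory Num.Theory.
Local Open Scope ring_scope.

Section Defs.
Variables (R : realType) (n : nat).
Implicit Types (A : 'M[R]_n) (z v : 'cV[R]_n) (beta : R).

Definition on_sphere z : Prop := \sum_(i < n) z i 0 ^+ 2 = 1.
Definition in_tangent z v : Prop := (v^T *m z) 0 0 = 0.
Definition vnorm v : R := Num.sqrt (\sum_(i < n) v i 0 ^+ 2).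
Definition diagsq z : 'M[R]_n := diag_mx (\row_i (z i 0 ^+ 2)).
Definition two_lambda A beta z : R :=
  (z^T *m A *m z) 0 0 + 2 * beta * \sum_(i < n) z i 0 ^+ 4.
Definition rgrad A beta z : 'cV[R]_n :=
  (A + (2 * beta) *: diagsq z) *m z - two_lambda A beta z *: z.
Definition rhess A beta z v : R :=
  (v^T *m (A + (6 * beta) *: diagsq z - (two_lambda A beta z)%:M) *m v) 0 0.

(* f(z) = 1/2 z^T A z + beta/2 sum z_k^4 is (xi,eps,zeta)-strict-saddle on S^{n-1} *)
Definition strict_saddle A beta (xi eps zeta : R) : Prop :=
  forall z, on_sphere z ->
    (forall v, in_tangent z v -> on_sphere v -> xi <= rhess A beta z v)
    \/ eps <= vnorm (rgrad A beta z)
    \/ (exists v, [/\ in_tangent z v, on_sphere v & rhess A beta z v <= - zeta]).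
End Defs.

From mathcomp Require Import all_boot all_order all_algebra.
From mathcomp Require Import reals classical_sets.
From mathcomp Require Import ring lra.
Import Order.TTheory GRing.Theory Num.Theory.
Local Open Scope ring_scope.
Set Implicit Arguments. Unset Strict Implicit. Unset Printing Implicit Defensive.

(* At z on the sphere the Riemannian gradient is w + 2 beta h, where
   w = A z - (z^T A z) z is tangent with |w| <= rho and h_i = z_i^3 - |z|_4^4 z_i.
   If the gradient is shorter than gamma rho / sqrt 2, then
   beta |h| <= (1 + gamma) rho / sqrt 2, and as beta >= 8 (1 + gamma) rho n^(3/2)
   this forces z_i^2 (z_i^2 - |z|_4^4)^2 <= 1 / (128 n^3) for every i.  Since
   |z|_4^4 >= 1/n, each z_i^2 is then either at most 1/(32 n), or within 1/(8 n) of
   |z|_4^4.  In the first case the projection of e_i on the tangent space is a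
   direction of curvature at most -C_gamma rho; in the second the diagonal term
   6 beta diag(z^2) dominates and the Hessian is at least C_gamma rho on the whole
   tangent space.
   The Rayleigh bounds lam_n |x|^2 <= x^T A x <= lam_1 |x|^2 are derived without a
   real spectral theorem: the infimum m of x^T A x on the sphere is an eigenvalue,
   for otherwise the positive semidefinite A - m would be invertible, hence coercive
   on the sphere, contradicting the definition of m. *)

Section DotProduct.
Variables (R : realFieldType) (n : nat).
Implicit Types (u v w x y : 'cV[R]_n) (B C : 'M[R]_n).

Definition dot u v : R := (u^T *m v) 0 0.
Definition qform B x : R := dot x (B *m x).

Lemma dotE u v : dot u v = \sum_i u i 0 * v i 0.
Proof. by rewrite /dot mxE; apply: eq_bigr => i _; rewrite mxE. Qed.

Lemma dotC u v : dot u v = dot v u.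
Proof. by rewrite !dotE; apply: eq_bigr => i _; rewrite mulrC. Qed.

Lemma dotDl u v w : dot (u + v) w = dot u w + dot v w.
Proof. by rewrite !dotE -big_split; apply: eq_bigr => i _; rewrite mxE mulrDl. Qed.

Lemma dotDr u v w : dot w (u + v) = dot w u + dot w v.
Proof. by rewrite !(dotC w) dotDl. Qed.

Lemma dotZl c u w : dot (c *: u) w = c * dot u w.
Proof. by rewrite !dotE mulr_sumr; apply: eq_bigr => i _; rewrite mxE mulrA. Qed.

Lemma dotZr c u w : dot w (c *: u) = c * dot w u.
Proof. by rewrite !(dotC w) dotZl. Qed.

Lemma dotBl u v w : dot (u - v) w = dot u w - dot v w.
Proof. by rewrite dotDl -scaleN1r dotZl mulN1r. Qed.

Lemma dotBr u v w : dot w (u - v) = dot w u - dot w v.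
Proof. by rewrite !(dotC w) dotBl. Qed.

Lemma dotvv u : dot u u = \sum_i u i 0 ^+ 2.
Proof. by rewrite dotE; apply: eq_bigr => i _; rewrite expr2. Qed.

Lemma dot_ge0 u : 0 <= dot u u.
Proof. by rewrite dotvv sumr_ge0 // => i _; rewrite sqr_ge0. Qed.

Lemma dot_eq0 u : (dot u u == 0) = (u == 0).
Proof.
apply/idP/eqP => [|->]; last by rewrite dotvv big1 // => i _; rewrite mxE expr0n.
rewrite dotvv psumr_eq0 => [/allP u0|i _]; last exact: sqr_ge0.
apply/matrixP => i j; rewrite ord1 mxE; apply/eqP.
by rewrite -sqrf_eq0; exact: (implyP (u0 i (mem_index_enum i))).
Qed.

Lemma dot_gt0 u : (0 < dot u u) = (u != 0).
Proof. by rewrite lt_def dot_ge0 andbT dot_eq0. Qed.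

Lemma dot_delta j x : dot (delta_mx j 0) x = x j 0.
Proof.
rewrite dotE (bigD1 j) //= big1 ?addr0 => [|i /negbTE ij]; last by rewrite mxE ij mul0r.
by rewrite mxE !eqxx mul1r.
Qed.

Lemma dot_mulmx_sym B x y : B^T = B -> dot x (B *m y) = dot y (B *m x).
Proof.
move=> symB; have trE (M : 'M[R]_1) : M 0 0 = M^T 0 0 by rewrite mxE.
by rewrite /dot [RHS]trE !trmx_mul trmxK symB mulmxA.
Qed.

Lemma qform1 x : qform 1%:M x = dot x x.
Proof. by rewrite /qform mul1mx. Qed.

Lemma qformBscalar B c x : qform (B - c%:M) x = qform B x - c * dot x x.
Proof. by rewrite /qform mulmxBl mul_scalar_mx dotBr dotZr. Qed.

Lemma dotZZ c x : dot (c *: x) (c *: x) = c ^+ 2 * dot x x.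
Proof. by rewrite dotZl dotZr mulrA expr2. Qed.

Lemma qformD B C x : qform (B + C) x = qform B x + qform C x.
Proof. by rewrite /qform mulmxDl dotDr. Qed.

Lemma qformZl c B x : qform (c *: B) x = c * qform B x.
Proof. by rewrite /qform -scalemxAl dotZr. Qed.

Lemma qformZ B c x : qform B (c *: x) = c ^+ 2 * qform B x.
Proof. by rewrite /qform -scalemxAr dotZl dotZr mulrA expr2. Qed.

Lemma qform0 B : qform B 0 = 0.
Proof. by rewrite /qform /dot !mulmx0 mxE. Qed.

Lemma qform_lincomb B a b x y : B^T = B ->
  qform B (a *: x + b *: y) =
  a ^+ 2 * qform B x + 2 * a * b * dot x (B *m y) + b ^+ 2 * qform B y.
Proof.
move=> symB; rewrite /qform mulmxDr -!scalemxAr !dotDl !dotDr !dotZl !dotZr.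
by rewrite (dot_mulmx_sym y x symB); ring.
Qed.

Lemma qform_diag d v : qform (diag_mx d) v = \sum_i d 0 i * v i 0 ^+ 2.
Proof. by rewrite /qform dotE; apply: eq_bigr => i _; rewrite mul_diag_mx mxE; ring. Qed.

Lemma discriminant_le (a b c : R) : 0 <= c ->
  (forall t, 0 <= a + 2 * b * t + c * t ^+ 2) -> b ^+ 2 <= a * c.
Proof.
move=> c_ge0 quad_ge0; have [c_gt0|] := ltrP 0 c.
  have := quad_ge0 (- b / c).
  have -> : a + 2 * b * (- b / c) + c * (- b / c) ^+ 2 = a - b ^+ 2 / c.
    by field; rewrite gt_eqF.
  by rewrite subr_ge0 ler_pdivrMr.
move=> c_le0; have c0 : c = 0 by apply/eqP; rewrite eq_le c_le0 c_ge0.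
rewrite c0 mulr0; have [-> | b_neq0] := eqVneq b 0; first by rewrite expr0n.
have := quad_ge0 (- (a + 1) / (2 * b)); rewrite c0 mul0r addr0.
have -> : a + 2 * b * (- (a + 1) / (2 * b)) = -1 by field.
by rewrite ler0N1.
Qed.

Lemma qform_CauchySchwarz C x y : C^T = C -> (forall x, 0 <= qform C x) ->
  dot y (C *m x) ^+ 2 <= qform C y * qform C x.
Proof.
move=> symC psdC; apply: discriminant_le (psdC x) _ => t.
suff -> : qform C y + 2 * dot y (C *m x) * t + qform C x * t ^+ 2
  = qform C (1 *: y + t *: x) by [].
by rewrite qform_lincomb //; ring.
Qed.

Lemma dot_CauchySchwarz u v : dot u v ^+ 2 <= dot u u * dot v v.
Proof.
rewrite -!qform1 -[u in dot _ u]mul1mx.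
by apply: qform_CauchySchwarz => [|x]; rewrite ?tr_scalar_mx // qform1 dot_ge0.
Qed.

Lemma dotBB_le u v : dot (u - v) (u - v) <= 2 * dot u u + 2 * dot v v.
Proof.
have := dot_ge0 (u + v); rewrite !dotBl !dotBr !dotDl !dotDr (dotC v u).
by move: (dot u u) (dot u v) (dot v v) => a b c; lra.
Qed.

Definition frob B : R := \sum_i \sum_j B i j ^+ 2.

Lemma frob_ge0 B : 0 <= frob B.
Proof. by apply: sumr_ge0 => i _; apply: sumr_ge0 => j _; rewrite sqr_ge0. Qed.

Lemma dot_mulmx_le B x : dot (B *m x) (B *m x) <= frob B * dot x x.
Proof.
rewrite dotvv /frob mulr_suml; apply: ler_sum => i _.
have -> : (B *m x) i 0 = dot (row i B)^T x.
  by rewrite dotE mxE; apply: eq_bigr => j _; rewrite !mxE.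
apply: le_trans (dot_CauchySchwarz _ _) _.
by rewrite dotvv; under eq_bigr do rewrite !mxE.
Qed.

Lemma qform_sqr_le B x : qform B x ^+ 2 <= frob B * dot x x ^+ 2.
Proof.
apply: le_trans (dot_CauchySchwarz _ _) _.
by rewrite mulrC expr2 mulrA ler_wpM2r ?dot_ge0 ?dot_mulmx_le.
Qed.

End DotProduct.

Section RayleighQuotient.
Variables (R : realType) (n : nat).
Implicit Types (x : 'cV[R]_n) (B C : 'M[R]_n).

Lemma sqrtrV_normalize (d : R) : 0 < d -> (Num.sqrt d)^-1 ^+ 2 * d = 1.
Proof. by move=> d_gt0; rewrite exprVn sqr_sqrtr ?mulVf ?gt_eqF ?ltW. Qed.

Local Open Scope classical_set_scope.

Definition rayleigh B : set R := qform B @` [set x | dot x x = 1].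

Lemma rayleigh_has_inf B x0 : dot x0 x0 = 1 -> has_inf (rayleigh B).
Proof.
move=> x0_1; split; first by exists (qform B x0), x0.
exists (- (1 + frob B)) => _ [x /= x1 <-].
have := qform_sqr_le B x; rewrite x1 expr1n mulr1 => qx_le.
have := frob_ge0 B; nra.
Qed.

Lemma inf_rayleigh_le B x0 : dot x0 x0 = 1 ->
  forall x, inf (rayleigh B) * dot x x <= qform B x.
Proof.
move=> x0_1 x; have [->|x_neq0] := eqVneq x 0.
  by rewrite qform0 -qform1 qform0 mulr0.
have xx_gt0 : 0 < dot x x by rewrite dot_gt0.
have := sqrtrV_normalize xx_gt0; set k := _^-1 => kk.
have : inf (rayleigh B) <= qform B (k *: x).
  by apply: ge_inf; [case: (rayleigh_has_inf B x0_1) | exists (k *: x); rewrite //= dotZZ].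
rewrite qformZ -(ler_pM2r xx_gt0) => /le_trans; apply.
by rewrite mulrAC kk mul1r.
Qed.

Lemma qform_coercive C : C^T = C -> (forall x, 0 <= qform C x) -> C \in unitmx ->
  exists2 c, 0 < c & forall x, dot x x = 1 -> c <= qform C x.
Proof.
move=> symC psdC unitC; pose KD := frob (invmx C); pose KC := frob C.
have [KD_ge0 KC_ge0] : 0 <= KD /\ 0 <= KC by split; apply: frob_ge0.
exists (1 + KD ^+ 2 * KC)^-1; first by rewrite invr_gt0; nra.
move=> x x1; set t := qform C x; set u := C *m x; set p := qform C u.
have [t_ge0 p_ge0 U_ge0] : [/\ 0 <= t, 0 <= p & 0 <= dot u u].
  by split; [apply: psdC | apply: psdC | apply: dot_ge0].
(* |u|^4 <= t p by Cauchy-Schwarz for the form of C, and 1 = |C^-1 u|^2 <= KD |u|^2. *)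
have U_ge : 1 <= KD * dot u u.
  by rewrite -x1 -{1 2}(mulKmx unitC x); apply: dot_mulmx_le.
have U2_le : dot u u ^+ 2 <= t * p.
  by have := qform_CauchySchwarz u x symC psdC; rewrite (dot_mulmx_sym _ _ symC).
have p2_le : p ^+ 2 <= KC * dot u u ^+ 2 by apply: qform_sqr_le.
have U_le : dot u u ^+ 2 <= KC * t ^+ 2.
  have U2_gt0 : 0 < dot u u ^+ 2 by rewrite exprn_gt0 //; nra.
  rewrite -(ler_pM2r U2_gt0); apply: le_trans (_ : (t * p) ^+ 2 <= _).
    by rewrite -expr2 ler_sqr ?nnegrE ?mulr_ge0 ?sqr_ge0.
  by have := ler_wpM2l (sqr_ge0 t) p2_le; rewrite exprMn; lra.
have L_le : 1 <= KD ^+ 2 * KC * t ^+ 2.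
  have : 1 <= (KD * dot u u) ^+ 2 by rewrite -(expr1n R 2) ler_sqr ?nnegrE //; lra.
  by move/le_trans; apply; rewrite exprMn -mulrA ler_wpM2l ?sqr_ge0.
rewrite -[_^-1]mulr1 ler_pdivrMl; last by nra.
by have [t_ge1|t_lt1] := lerP 1 t; nra.
Qed.

Lemma eigenvalue_inf_rayleigh B x0 : B^T = B -> dot x0 x0 = 1 ->
  eigenvalue B (inf (rayleigh B)).
Proof.
move=> symB x0_1; set m := inf _.
pose C := B - m%:M.
have symC : C^T = C by rewrite /C raddfB /= symB tr_scalar_mx.
have psdC x : 0 <= qform C x by rewrite qformBscalar subr_ge0 (inf_rayleigh_le B x0_1).
have [unitC|] := boolP (C \in unitmx); last first.
  by rewrite /eigenvalue /eigenspace kermx_eq0 row_free_unit.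
have [c c_gt0 c_le] := qform_coercive symC psdC unitC.
have [_ [x x1 <-]] := inf_adherent c_gt0 (rayleigh_has_inf B x0_1).
by have := c_le x x1; rewrite qformBscalar x1 mulr1 lerBrDl ltNge => ->.
Qed.

Local Close Scope classical_set_scope.

Lemma eigenvalue_le_qform B c : B^T = B -> (forall a, eigenvalue B a -> c <= a) ->
  forall x, c * dot x x <= qform B x.
Proof.
move=> symB c_le x; have [->|x_neq0] := eqVneq x 0.
  by rewrite qform0 -qform1 qform0 mulr0.
have xx_gt0 : 0 < dot x x by rewrite dot_gt0.
have := sqrtrV_normalize xx_gt0; set k := _^-1 => kk.
have y1 : dot (k *: x) (k *: x) = 1 by rewrite dotZZ.
apply: le_trans (inf_rayleigh_le B y1 x).
by rewrite ler_pM2r // c_le // (eigenvalue_inf_rayleigh symB y1).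
Qed.

Lemma qform_le_eigenvalue B c : B^T = B -> (forall a, eigenvalue B a -> a <= c) ->
  forall x, qform B x <= c * dot x x.
Proof.
move=> symB le_c x; rewrite -lerN2 -mulNr.
have -> : - qform B x = qform (- B) x by rewrite /qform mulNmx -scaleN1r dotZr mulN1r.
apply: eigenvalue_le_qform => [|a /eigenvalueP[v vB v_neq0]]; first by rewrite linearN /= symB.
rewrite lerNl le_c //; apply/eigenvalueP; exists v => //.
by rewrite scaleNr -vB mulmxN opprK.
Qed.

End RayleighQuotient.

Section RealInequalities.
Variable R : realFieldType.
Implicit Types (N mu a beta : R).

Lemma coord_sqr_le_of_lt_half N mu a : 0 <= N -> 1 <= N * mu ->
  128 * N ^+ 3 * (a ^+ 3 - mu * a) ^+ 2 <= 1 -> a ^+ 2 < mu / 2 -> 32 * N * a ^+ 2 <= 1.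
Proof.
move=> N_ge0 Nmu_ge dev_le a2_lt.
have gap_ge : 1 <= 2 * N * (mu - a ^+ 2) by nra.
have gap2_ge : 1 <= (2 * N * (mu - a ^+ 2)) ^+ 2 by nra.
have : 0 <= 32 * N * a ^+ 2 by rewrite mulr_ge0 ?sqr_ge0 // mulr_ge0.
have dev_eq : 128 * N ^+ 3 * (a ^+ 3 - mu * a) ^+ 2 =
              32 * N * a ^+ 2 * (2 * N * (mu - a ^+ 2)) ^+ 2 by ring.
rewrite dev_eq in dev_le; nra.
Qed.

Lemma coord_gap_le_of_ge_half N mu a : 0 <= N -> 1 <= N * mu ->
  128 * N ^+ 3 * (a ^+ 3 - mu * a) ^+ 2 <= 1 -> mu / 2 <= a ^+ 2 -> 8 * N * (mu - a ^+ 2) <= 1.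
Proof.
move=> N_ge0 Nmu_ge dev_le a2_ge.
have : (8 * N * (mu - a ^+ 2)) ^+ 2 * (N * mu) <= 1.
  apply: le_trans dev_le; rewrite -subr_ge0.
  have -> : 128 * N ^+ 3 * (a ^+ 3 - mu * a) ^+ 2 - (8 * N * (mu - a ^+ 2)) ^+ 2 * (N * mu)
    = 64 * N ^+ 3 * (mu - a ^+ 2) ^+ 2 * (2 * a ^+ 2 - mu) by ring.
  apply: mulr_ge0; last lra.
  by rewrite mulr_ge0 ?sqr_ge0 // mulr_ge0 // exprn_ge0.
set gap := 8 * N * (mu - a ^+ 2) => gap_le.
have : 0 <= gap ^+ 2 * (N * mu - 1) by rewrite mulr_ge0 ?sqr_ge0 ?subr_ge0.
nra.
Qed.

Lemma escape_curvature_le N mu beta (kr a2 s : R) : 2 <= N -> 1 <= N * mu -> 0 < beta ->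
  2 * N * kr <= beta -> 0 <= a2 -> 32 * N * a2 <= 1 -> s * (1 - a2) = 1 ->
  6 * beta * (s * (a2 - 2 * a2 ^+ 2 + a2 * mu)) - 2 * beta * mu <= - kr.
Proof.
move=> N_ge2 Nmu_ge beta_gt0 kr_le a2_ge0 a2_le s_eq.
have a2_small : 64 * a2 <= 1 by nra.
have mu_ge : 32 * a2 <= mu by nra.
have s_le : 63 * s <= 64 by nra.
have X_le : 21 * (s * (a2 - 2 * a2 ^+ 2 + a2 * mu)) <= mu by nra.
have kr_half : 2 * kr <= beta * mu by nra.
by have := ler_wpM2l (ltW beta_gt0) X_le; nra.
Qed.

Lemma balanced_curvature_ge N mu beta (kr X : R) : 2 <= N -> 1 <= N * mu -> 0 < beta ->
  2 * N * kr <= beta -> 8 * N * (mu - X) <= 1 -> kr <= 6 * beta * X - 2 * beta * mu.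
Proof.
move=> N_ge2 Nmu_ge beta_gt0 kr_le X_ge.
have : N * kr <= N * (6 * beta * X - 2 * beta * mu) by nra.
by rewrite ler_pM2l //; lra.
Qed.

Lemma beta_bounds N (s gamma rho : R) beta : 2 <= N -> 0 < s -> s ^+ 2 = N ->
  0 <= gamma -> 0 < rho -> 8 * N / (N - 1) * (1 + gamma) * rho * (N * s) <= beta ->
  [/\ 0 < beta, 2 * N * (4 / (N - 1) * (1 + gamma) * (N * s) * rho) <= beta &
      64 * N ^+ 3 * ((1 + gamma) ^+ 2 * rho ^+ 2) <= beta ^+ 2].
Proof.
move=> N_ge2 s_gt0 s2 gamma_ge0 rho_gt0 beta_ge.
have N1_neq0 : N - 1 != 0 by rewrite gt_eqF // subr_gt0 (lt_le_trans _ N_ge2) ?ltr1n.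
set P := 8 * N * (1 + gamma) * rho * s.
have P_gt0 : 0 < P by rewrite !mulr_gt0 //; lra.
have P_le : P <= beta.
  apply: le_trans beta_ge; have -> : 8 * N / (N - 1) * (1 + gamma) * rho * (N * s)
    = P * (N / (N - 1)) by rewrite /P; field.
  by apply: ler_peMr (ltW P_gt0) _; rewrite ler_pdivlMr ?mul1r; lra.
have beta_gt0 := lt_le_trans P_gt0 P_le.
split=> //.
  by rewrite (_ : 2 * N * _ = 8 * N / (N - 1) * (1 + gamma) * rho * (N * s)) //; field.
have -> : 64 * N ^+ 3 * ((1 + gamma) ^+ 2 * rho ^+ 2) = P ^+ 2.
  by rewrite /P !exprMn s2; ring.
by rewrite ler_sqr ?nnegrE ?(ltW P_gt0) ?(ltW beta_gt0).
Qed.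
End RealInequalities.

Section QuarticObjective.
Variables (R : realType) (n : nat).
Implicit Types (A : 'M[R]_n) (z v : 'cV[R]_n) (beta : R).

Definition norm4_4 z : R := \sum_i z i 0 ^+ 4.
Definition grad_quad A z : 'cV[R]_n := A *m z - qform A z *: z.
Definition grad_quart z : 'cV[R]_n := \col_i (z i 0 ^+ 3 - norm4_4 z * z i 0).

Lemma on_sphereE z : on_sphere z <-> dot z z = 1.
Proof. by rewrite /on_sphere dotvv. Qed.

Lemma vnormE v : vnorm v = Num.sqrt (dot v v).
Proof. by rewrite /vnorm dotvv. Qed.

Lemma vnorm_lt_sqr v c : vnorm v < c -> dot v v < c ^+ 2.
Proof.
move=> v_lt; have c_ge0 : 0 <= c by rewrite ltW // (le_lt_trans (sqrtr_ge0 _) v_lt).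
by move: v_lt; rewrite vnormE -ltr_sqr ?nnegrE ?sqrtr_ge0 // sqr_sqrtr ?dot_ge0.
Qed.

Lemma qform_diagsq z v : qform (diagsq z) v = \sum_i z i 0 ^+ 2 * v i 0 ^+ 2.
Proof. by rewrite qform_diag; apply: eq_bigr => i _; rewrite mxE. Qed.

Lemma two_lambdaE A beta z : two_lambda A beta z = qform A z + 2 * beta * norm4_4 z.
Proof. by rewrite /two_lambda -mulmxA. Qed.

Lemma rhessE A beta z v : rhess A beta z v =
  qform A v + 6 * beta * qform (diagsq z) v - two_lambda A beta z * dot v v.
Proof. by rewrite /rhess -mulmxA -[(_^T *m _) 0 0]/(qform _ v) qformBscalar qformD qformZl. Qed.

Lemma rgradE A beta z : rgrad A beta z = grad_quad A z + (2 * beta) *: grad_quart z.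
Proof.
rewrite /rgrad two_lambdaE mulmxDl -scalemxAl /diagsq mul_diag_mx.
by apply/matrixP => i j; rewrite !mxE ord1 /qform /dot; ring.
Qed.

Lemma norm4_4_ge z : dot z z = 1 -> 1 <= n%:R * norm4_4 z.
Proof.
move=> z1; pose z2 : 'cV[R]_n := \col_i z i 0 ^+ 2; pose one : 'cV[R]_n := const_mx 1.
have z2_one : dot z2 one = 1.
  by rewrite -[RHS]z1 dotvv dotE; apply: eq_bigr => i _; rewrite !mxE mulr1.
have z2_z2 : dot z2 z2 = norm4_4 z.
  by rewrite dotvv; apply: eq_bigr => i _; rewrite mxE -exprM.
have one_one : dot one one = n%:R.
  by rewrite dotvv (eq_bigr (fun=> 1)) ?sumr_const ?card_ord // => i _; rewrite mxE expr1n.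
by have := dot_CauchySchwarz z2 one; rewrite z2_one z2_z2 one_one expr1n mulrC.
Qed.

End QuarticObjective.

Section SaddleAnalysis.
Variables (R : realType) (n : nat) (A : 'M[R]_n) (lam1 lamn : R).
Hypothesis symA : A^T = A.
Hypothesis rayleighA : forall x, lamn * dot x x <= qform A x <= lam1 * dot x x.
Implicit Types (z v x y : 'cV[R]_n).

Lemma dot_mulmx_orth_le x y : dot x y = 0 ->
  4 * dot x (A *m y) <= (lam1 - lamn) * (dot x x + dot y y).
Proof.
move=> xy0; have sym1 : (1%:M : 'M[R]_n)^T = 1%:M by rewrite tr_scalar_mx.
have /andP[_ xpy] := rayleighA (1 *: x + 1 *: y).
have /andP[xmy _] := rayleighA (1 *: x + (-1) *: y).
rewrite -!qform1 !qform_lincomb // !qform1 mul1mx xy0 in xpy xmy.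
lra.
Qed.

Lemma grad_quad_le z : dot z z = 1 -> 0 < lam1 - lamn ->
  dot (grad_quad A z) (grad_quad A z) <= (lam1 - lamn) ^+ 2.
Proof.
move=> z1; set w := grad_quad A z; set rho := lam1 - lamn => rho_gt0.
have wz0 : dot w z = 0 by rewrite dotBl dotZl z1 mulr1 dotC subrr.
have ww : dot w w = dot w (A *m z) by rewrite {1}/w dotBr dotZr wz0 mulr0 subr0.
have := @dot_mulmx_orth_le w (rho *: z); rewrite dotZr wz0 mulr0 => /(_ erefl).
rewrite -scalemxAr dotZr -ww dotZZ z1 mulr1 -/rho => le.
have wr_ge0 := mulr_ge0 (ltW rho_gt0) (dot_ge0 w).
by rewrite -(ler_pM2l rho_gt0); lra.
Qed.

Lemma grad_quart_coord_le beta gamma z j : dot z z = 1 -> 0 < lam1 - lamn ->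
  0 < beta -> 0 <= gamma ->
  64 * n%:R ^+ 3 * ((1 + gamma) ^+ 2 * (lam1 - lamn) ^+ 2) <= beta ^+ 2 ->
  dot (rgrad A beta z) (rgrad A beta z) <= gamma ^+ 2 * (lam1 - lamn) ^+ 2 / 2 ->
  128 * n%:R ^+ 3 * (z j 0 ^+ 3 - norm4_4 z * z j 0) ^+ 2 <= 1.
Proof.
move=> z1 rho_gt0 beta_gt0 gamma_ge0 beta2_ge grad_le.
set rho := lam1 - lamn in rho_gt0 beta2_ge grad_le *.
set g := rgrad A beta z in grad_le; set h := grad_quart z.
have h_le : 4 * beta ^+ 2 * dot h h <= 2 * ((1 + gamma) ^+ 2 * rho ^+ 2).
  have <- : dot (g - grad_quad A z) (g - grad_quad A z) = 4 * beta ^+ 2 * dot h h.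
    by rewrite /g rgradE addrC addKr dotZZ; ring.
  apply: le_trans (dotBB_le _ _) _; have := grad_quad_le z1 rho_gt0; rewrite -/rho.
  have := mulr_ge0 gamma_ge0 (sqr_ge0 rho); have := sqr_ge0 (gamma * rho); nra.
have hj_le : (z j 0 ^+ 3 - norm4_4 z * z j 0) ^+ 2 <= dot h h.
  by rewrite dotvv (bigD1 j) //= mxE lerDl sumr_ge0 // => i _; rewrite sqr_ge0.
have N3_ge0 : 0 <= n%:R ^+ 3 :> R by rewrite exprn_ge0.
have H_le : 128 * n%:R ^+ 3 * dot h h <= 1.
  rewrite -(ler_pM2l (exprn_gt0 2 beta_gt0)) mulr1; apply: le_trans beta2_ge.
  by have := ler_wpM2l N3_ge0 h_le; lra.
by apply: le_trans H_le; rewrite ler_wpM2l ?mulr_ge0.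
Qed.

Variables (beta kap : R).
Hypotheses (n_ge2 : (2 <= n)%N) (beta_gt0 : 0 < beta).
Hypothesis beta_ge : 2 * n%:R * (kap * (lam1 - lamn)) <= beta.

Lemma rhess_escape z j : dot z z = 1 -> 32 * n%:R * z j 0 ^+ 2 <= 1 ->
  exists v, [/\ in_tangent z v, on_sphere v &
                rhess A beta z v <= - ((kap - 1) * (lam1 - lamn))].
Proof.
move=> z1; set a : R := z j 0; set mu := norm4_4 z => zj_le.
have N_ge2 : 2 <= n%:R :> R by rewrite (ler_nat R 2 n).
have a2_lt1 : a ^+ 2 < 1.
  have : 0 <= a ^+ 2 * (n%:R - 2) by rewrite mulr_ge0 ?sqr_ge0 ?subr_ge0.
  nra.
(* x = e_j - z_j z is the projection of e_j on the tangent space at z. *)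
pose e : 'cV[R]_n := delta_mx j 0; pose x := 1 *: e + (- a) *: z.
have xz0 : dot x z = 0 by rewrite dotDl !dotZl dot_delta -/a z1; ring.
have xx : dot x x = 1 - a ^+ 2.
  rewrite -qform1 qform_lincomb ?tr_scalar_mx // !qform1 mul1mx !dot_delta mxE !eqxx /= -/a z1.
  ring.
have Dx : qform (diagsq z) x = a ^+ 2 - 2 * a ^+ 2 ^+ 2 + a ^+ 2 * mu.
  rewrite qform_lincomb ?tr_diag_mx // [qform _ z]qform_diagsq /qform !dot_delta.
  rewrite /diagsq !mul_diag_mx !mxE !eqxx /= -/a.
  have -> : \sum_i z i 0 ^+ 2 * z i 0 ^+ 2 = mu by apply: eq_bigr => i _; rewrite -exprD.
  ring.
have xx_gt0 : 0 < dot x x by rewrite xx subr_gt0.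
have := sqrtrV_normalize xx_gt0; set k := _^-1; rewrite xx => kk.
pose v := k *: x; have v1 : dot v v = 1 by rewrite dotZZ xx.
exists v; split; first by rewrite /in_tangent -[(_ *m _) 0 0]/(dot _ z) dotZl xz0 mulr0.
  by rewrite on_sphereE.
have /andP[_ Av] := rayleighA v; have /andP[Az _] := rayleighA z.
rewrite v1 z1 !mulr1 in Av Az.
have := escape_curvature_le N_ge2 (norm4_4_ge z1) beta_gt0 beta_ge (sqr_ge0 a) zj_le kk.
by rewrite rhessE two_lambdaE v1 [qform (diagsq z) _]qformZ Dx -/mu; lra.
Qed.

Lemma rhess_balanced_ge z v : dot z z = 1 -> dot v v = 1 ->
  (forall j, 8 * n%:R * (norm4_4 z - z j 0 ^+ 2) <= 1) ->
  (kap - 1) * (lam1 - lamn) <= rhess A beta z v.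
Proof.
move=> z1 v1 z_bal; rewrite rhessE two_lambdaE v1 mulr1.
have /andP[Av _] := rayleighA v; have /andP[_ Az] := rayleighA z.
rewrite v1 z1 !mulr1 in Av Az.
have N_ge2 : 2 <= n%:R :> R by rewrite (ler_nat R 2 n).
have : kap * (lam1 - lamn) <= 6 * beta * qform (diagsq z) v - 2 * beta * norm4_4 z.
  apply: balanced_curvature_ge N_ge2 (norm4_4_ge z1) beta_gt0 beta_ge _.
  have gap_sum : norm4_4 z - \sum_i z i 0 ^+ 2 * v i 0 ^+ 2 =
                  \sum_i (norm4_4 z - z i 0 ^+ 2) * v i 0 ^+ 2.
    rewrite -[X in X - _]mulr1 -v1 dotvv mulr_sumr -sumrB.
    by apply: eq_bigr => i _; rewrite mulrBl.
  rewrite qform_diagsq gap_sum mulr_sumr -[X in _ <= X]v1 dotvv.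
  by apply: ler_sum => i _; rewrite mulrA ler_piMl ?sqr_ge0.
lra.
Qed.

End SaddleAnalysis.

Theorem theorem12 (R : realType) (n : nat) (A : 'M[R]_n) (lam1 lamn gamma beta : R) :
  (2 <= n)%N ->
  A^T = A ->
  eigenvalue A lam1 -> eigenvalue A lamn ->
  (forall a, eigenvalue A a -> lamn <= a <= lam1) ->
  0 < gamma ->
  let rho := lam1 - lamn in
  let n32 := n%:R * Num.sqrt (n%:R : R) in
  8 * n%:R / (n%:R - 1) * (1 + gamma) * rho * n32 <= beta ->
  let Cg := 4 / (n%:R - 1) * (1 + gamma) * n32 - 1 in
  strict_saddle A beta (Cg * rho) (gamma / Num.sqrt 2 * rho) (Cg * rho).
Proof.
move=> n_ge2 symA _ _ eig_bounds gamma_gt0 rho n32 beta_ge Cg z /on_sphereE z1.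
have rayleighA x : lamn * dot x x <= qform A x <= lam1 * dot x x.
  by rewrite eigenvalue_le_qform ?qform_le_eigenvalue // => a /eig_bounds /andP[].
have [|grad_lt] := lerP (gamma / Num.sqrt 2 * rho) (vnorm (rgrad A beta z)).
  by right; left.
have rho_gt0 : 0 < rho.
  by move: (le_lt_trans (sqrtr_ge0 _) grad_lt); rewrite pmulr_rgt0 // divr_gt0 ?sqrtr_gt0.
have grad_le : dot (rgrad A beta z) (rgrad A beta z) <= gamma ^+ 2 * rho ^+ 2 / 2.
  by have := ltW (vnorm_lt_sqr grad_lt); rewrite !exprMn exprVn sqr_sqrtr // mulrAC.
have N_ge2 : 2 <= n%:R :> R by rewrite (ler_nat R 2 n).
have s_gt0 : 0 < Num.sqrt (n%:R : R) by rewrite sqrtr_gt0 (lt_le_trans _ N_ge2).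
have [beta_gt0 beta_kap beta2_ge] :=
  beta_bounds N_ge2 s_gt0 (sqr_sqrtr (ler0n _ _)) (ltW gamma_gt0) rho_gt0 beta_ge.
have coord_le j := grad_quart_coord_le symA rayleighA j z1 rho_gt0 beta_gt0
  (ltW gamma_gt0) beta2_ge grad_le.
have Nmu := norm4_4_ge z1.
have [/existsP[j zj_lt] | /existsPn z_bal] := boolP [exists j, z j 0 ^+ 2 < norm4_4 z / 2].
  right; right; apply: (rhess_escape rayleighA n_ge2 beta_gt0 beta_kap z1).
  exact: coord_sqr_le_of_lt_half (ler0n _ _) Nmu (coord_le j) zj_lt.
left => v _ /on_sphereE v1.
apply: (rhess_balanced_ge rayleighA n_ge2 beta_gt0 beta_kap z1 v1) => j.
by apply: coord_gap_le_of_ge_half (ler0n _ _) Nmu (coord_le j) _; rewrite leNgt z_bal.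
Qed.
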